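(* Let $p$ be a prime with $p\equiv 3 \pmod 4$. Then $$\sum_{k=0}^{p-1}\frac{\binom{2k}{k} f_k}{(-16)^k} \equiv 0 \pmod{p}.$$
   Context: The Franel numbers are defined by $f_n=\sum_{k=0}^n \binom{n}{k}^3$ for integers $n\ge 0$. The left-hand side is a rational number whose denominator is a power of $2$, hence coprime to $p$; a congruence modulo $p$ between such rationals means that the difference has numerator (in lowest terms) divisible by $p$ and denominator coprime to $p$. *)

From mathcomp Require Import all_boot all_order all_algebra.
Set Implicit Arguments. Unset Strict Implicit. Unset Printing Implicit Defensive.
Import Order.TTheory GRing.Theory Num.Theory.

Definition franel (n : nat) : nat := (\sum_(k < n.+1) 'C(n, k) ^ 3)%N.

(* Congruence of rationals modulo a (prime) p: the difference, in lowest
   terms, has numerator divisible by p and denominator coprime to p. *)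
Definition rat_cong (p : nat) (x y : rat) : Prop :=
  (p %| `|numq (x - y)|)%N /\ coprime p `|denq (x - y)|.

From mathcomp Require Import all_boot all_order all_algebra.
From mathcomp Require Import ring zify.
Import GRing.Theory Num.Theory.

(* Work in F_p with p = 2n + 1.  There binom(2k, k) = (-4)^k binom(n, k), since
   -1/2 = n, so with x = 1/4 the sum becomes sum_k binom(n, k) f_k x^k.  Strehl's
   identity f_k = sum_j binom(k, j)^2 binom(2j, k) turns this into
   sum_j (-1)^j binom(n, j)^2 Q(n - j, j) with the symmetric
   Q(a, b) = sum_i binom(a, i) binom(b, i) x^i, and since n is odd (p = 3 mod 4)
   the terms j and n - j cancel.  Clearing the powers of 16 from the
   denominators transfers this vanishing in F_p to the rational congruence. *)

Set Implicit Arguments.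
Unset Strict Implicit.
Unset Printing Implicit Defensive.

Lemma big_ord_widen_idx (R : Type) (idx : R) (op : Monoid.law idx)
    n1 n2 (F : nat -> R) :
  n1 <= n2 -> (forall i, n1 <= i < n2 -> F i = idx) ->
  \big[op/idx]_(i < n2) F i = \big[op/idx]_(i < n1) F i.
Proof.
move=> le_n12 F0; rewrite (big_ord_widen _ F le_n12).
rewrite [RHS]big_mkcond; apply: eq_bigr => i _; case: ltnP => // le_n1i.
by rewrite F0 // le_n1i ltn_ord.
Qed.

Lemma big_ord_shift_idx (R : Type) (idx : R) (op : Monoid.law idx)
    N j (F : nat -> R) :
  j <= N -> (forall k, k < j -> F k = idx) ->
  \big[op/idx]_(k < N) F k = \big[op/idx]_(i < N - j) F (i + j).
Proof.
move=> le_jN F0; rewrite -(big_mkord xpredT) (big_cat_nat (leq0n j) le_jN) /=.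
rewrite big_nat_cond big1 ?Monoid.mul1m; last by move=> k /andP[/andP[_ /F0]].
by rewrite -{1}[j]add0n big_addn big_mkord.
Qed.

Lemma mul_bin_shift a c t :
  'C(a, c + t) * 'C(c + t, c) = 'C(a, c) * 'C(a - c, t).
Proof.
have [le_ct_a | lt_a_ct] := leqP (c + t) a; last first.
  rewrite bin_small // mul0n; have [le_ca | lt_ac] := leqP c a.
    by rewrite (@bin_small (a - c)) ?muln0 //; lia.
  by rewrite bin_small.
have le_ca : c <= a by lia.
have le_t_ac : t <= a - c by lia.
apply/eqP; rewrite -(@eqn_pmul2r (c`! * t`! * (a - c - t)`!)) ?muln_gt0 ?fact_gt0 //.
apply/eqP.
have := bin_fact le_ct_a; have := @bin_fact (c + t) c (leq_addr _ _).
have := bin_fact le_ca; have := bin_fact le_t_ac.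
rewrite addKn subnDA => Efact_ac_t Efact_a_c Efact_ct_c Efact_a_ct.
transitivity (a`!).
  by rewrite -Efact_a_ct -Efact_ct_c; ring.
by rewrite -Efact_a_c -Efact_ac_t; ring.
Qed.

Lemma mul_bin_rev a b c :
  b <= a -> 'C(a, b) * 'C(b, c) = 'C(a, c) * 'C(a - c, a - b).
Proof.
move=> le_ba; have [le_cb | lt_bc] := leqP c b; last first.
  rewrite (@bin_small b) // muln0; have [le_ca | lt_ac] := leqP c a.
    by rewrite (@bin_small (a - c)) ?muln0 //; lia.
  by rewrite bin_small.
have -> : a - b = (a - c) - (b - c) by lia.
by rewrite -{1 2}(subnKC le_cb) mul_bin_shift bin_sub ?leq_sub2r.
Qed.

Lemma Vandermonde_diag a b : \sum_(j < a.+1) 'C(a, j) * 'C(b, j) = 'C(a + b, a).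
Proof.
rewrite addnC -binomial.Vandermonde; apply: eq_bigr => j _.
by rewrite bin_sub 1?mulnC // -ltnS.
Qed.

Lemma franel_Strehl k : franel k = \sum_(j < k.+1) 'C(k, j) ^ 2 * 'C(j.*2, k).
Proof.
under [RHS]eq_bigr => j _ do rewrite -addnn -binomial.Vandermonde big_distrr.
rewrite exchange_big; apply: eq_bigr => i _ /=.
have le_ik : i <= k by rewrite -ltnS.
transitivity (\sum_(j < k.+1) 'C(k, i) ^ 2 * ('C(k - i, k - j) * 'C(i, k - j))).
  rewrite -big_distrr /= (reindex_inj rev_ord_inj) /=.
  under eq_bigr => j _ do rewrite subSS subKn ?(leq_trans (leq_ord j)) //.
  rewrite (@big_ord_widen_idx _ _ _ (k - i).+1 _ (fun j => 'C(k - i, j) * 'C(i, j)))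
    ?ltnS ?leq_subr //; last first.
    by move=> j /andP[lt_j _]; rewrite bin_small.
  by rewrite Vandermonde_diag subnK // bin_sub // -expnSr.
apply: eq_bigr => j _; have le_jk : j <= k by rewrite -ltnS.
rewrite [RHS](_ : _ = ('C(k, j) * 'C(j, i)) * ('C(k, j) * 'C(j, k - i))); last by ring.
by rewrite !mul_bin_rev // subKn // bin_sub //; ring.
Qed.

Lemma central_binS k : 'C(k.+1.*2, k.+1) * k.+1 = (k.*2.+1).*2 * 'C(k.*2, k).
Proof.
have := mul_bin_diag k.+1.*2 k; have := mul_bin_down k.*2.+1 k.
rewrite doubleS /= -addnn subSn ?leq_addr // addnK => down diag.
by rewrite mulnC -diag -mul2n -mulnA down; ring.
Qed.

Local Open Scope ring_scope.

Lemma central_bin_ffact (R : comPzRingType) n k : (n.*2.+1)%:R = 0 :> R ->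
  'C(k.*2, k)%:R * k`!%:R = (-4) ^+ k * (n ^_ k)%:R :> R.
Proof.
move=> char_n; elim: k => [|k IHk]; first by rewrite bin0 fact0 ffactn0 mulr1.
rewrite factS natrM mulrA -natrM central_binS natrM -mulrA IHk.
rewrite ffactnSr natrM exprS; have [le_kn | lt_nk] := leqP k n; last first.
  by rewrite ffact_small // !(mulr0, mul0r).
have two_n1 : 2 * n%:R + 1 = 0 :> R.
  by rewrite -char_n -[n.*2.+1]addn1 -mul2n natrD natrM.
rewrite natrB // -[(k.*2.+1).*2]mul2n -[k.*2.+1]addn1 -mul2n natrM natrD natrM.
apply/eqP; rewrite -subr_eq0; apply/eqP.
transitivity (2 * (-4) ^+ k * (n ^_ k)%:R * (2 * n%:R + 1) : R); first by ring.
by rewrite two_n1 mulr0.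
Qed.


Lemma sum_odd_antisym (V : zmodType) n (F : nat -> V) : odd n ->
  (forall j, (j <= n)%N -> F (n - j)%N = - F j) -> \sum_(j < n.+1) F j = 0.
Proof.
move=> n_odd FN; set m := n./2.
have n_def : n = (m.*2.+1)%N by rewrite -[LHS]odd_double_half n_odd.
have le_m_n : (m.+1 <= n.+1)%N by lia.
rewrite -(big_mkord xpredT) (big_cat_nat (leq0n m.+1) le_m_n) /=.
rewrite -{2}[m.+1]add0n big_addn big_nat_rev /=.
have -> : (n.+1 - m.+1 = m.+1)%N by rewrite n_def -addnn; lia.
apply/eqP; rewrite addrC addr_eq0 -sumrN; apply/eqP.
apply: eq_big_nat => i /andP[_ lt_im].
by rewrite -FN ?n_def; [congr F | ]; lia.
Qed.

Definition bin_pair_sum (R : pzSemiRingType) (a b : nat) (x : R) : R :=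
  \sum_(i < (a + b).+1) ('C(a, i) * 'C(b, i))%:R * x ^+ i.

Lemma bin_pair_sumC (R : pzSemiRingType) a b (x : R) :
  bin_pair_sum a b x = bin_pair_sum b a x.
Proof. by rewrite /bin_pair_sum addnC; under eq_bigr do rewrite mulnC. Qed.

Lemma franel_binomial_sum (R : comPzSemiRingType) n (x : R) :
  \sum_(k < n.+1) ('C(n, k) * franel k)%:R * x ^+ k =
  \sum_(j < n.+1) ('C(n, j) * 'C(j.*2, j))%:R * x ^+ j * bin_pair_sum (n - j) j x.
Proof.
transitivity (\sum_(k < n.+1) \sum_(j < n.+1)
    ('C(n, k) * 'C(k, j) ^ 2 * 'C(j.*2, k))%:R * x ^+ k).
  apply: eq_bigr => k _; rewrite franel_Strehl big_distrr natr_sum big_distrl /=.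
  rewrite (@big_ord_widen_idx _ _ _ k.+1 n.+1
    (fun j => ('C(n, k) * 'C(k, j) ^ 2 * 'C(j.*2, k))%:R * x ^+ k)) //.
  - by apply: eq_bigr => j _; rewrite mulnA.
  - by move=> j /andP[lt_kj _]; rewrite (@bin_small k j) // exp0n // muln0 mul0n mul0r.
rewrite exchange_big /=; apply: eq_bigr => j _; have le_jn : (j <= n)%N by rewrite -ltnS.
rewrite (@big_ord_shift_idx _ _ _ n.+1 j
    (fun k => ('C(n, k) * 'C(k, j) ^ 2 * 'C(j.*2, k))%:R * x ^+ k)); last 2 first.
- exact: ltnW.
- by move=> k lt_kj; rewrite (@bin_small k j) // exp0n // muln0 mul0n mul0r.
rewrite subSn // /bin_pair_sum subnK // (@big_ord_widen_idx _ _ _ (n - j).+1 n.+1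
    (fun i => ('C(n - j, i) * 'C(j, i))%:R * x ^+ i)); last 2 first.
- by rewrite ltnS leq_subr.
- by move=> i /andP[lt_i _]; rewrite (@bin_small (n - j)) // mul0n mul0r.
rewrite big_distrr /=; apply: eq_bigr => i _.
have shift a : ('C(a, i + j) * 'C(i + j, j) = 'C(a, j) * 'C(a - j, i))%N.
  by rewrite addnC mul_bin_shift.
rewrite exprD -mulnn mulnA shift mulnAC -mulnA shift -addnn addnK.
by rewrite !natrM; ring.
Qed.

Section FranelModPrime.

Variables p n : nat.
Hypothesis p_pr : prime p.
Hypothesis p_ndvd_def : p = n.*2.+1.

Lemma fact_Fp_neq0 k : (k < p)%N -> k`!%:R != 0 :> 'F_p.
Proof.
move=> lt_kp; rewrite -(dvdn_pcharf (pchar_Fp p_pr)) fact_prod Euclid_dvd_prod //.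
rewrite big_has; apply/hasPn => i; rewrite mem_index_iota => /andP[i_gt0 le_ik].
by rewrite gtnNdvd // (leq_trans le_ik).
Qed.

Lemma central_bin_Fp k : (k < p)%N -> 'C(k.*2, k)%:R = (-4) ^+ k * 'C(n, k)%:R :> 'F_p.
Proof.
move=> lt_kp; apply: (mulIf (fact_Fp_neq0 lt_kp)).
rewrite (@central_bin_ffact _ n) -?p_ndvd_def ?pchar_Fp_0 //.
by rewrite -mulrA -natrM bin_ffact.
Qed.

Hypothesis n_odd : odd n.

Lemma franel_central_sum_Fp :
  \sum_(k < p) ('C(k.*2, k) * franel k)%:R * (-16)^-1 ^+ k = 0 :> 'F_p.
Proof.
have lt_np : (n < p)%N by rewrite p_ndvd_def -addnn; lia.
have four_neq0 : 4 != 0 :> 'F_p.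
  rewrite -(dvdn_pcharf (pchar_Fp p_pr)) -prime_coprime // (_ : 4 = 2 ^ 2)%N //.
  by rewrite coprimeXr // coprimen2 p_ndvd_def /= odd_double.
set x : 'F_p := 4^-1.
have x_sign : -4 * x = -1 by rewrite mulNr mulfV.
have central_x : -4 * (-16)^-1 = x.
  rewrite (_ : -16 = -4 * 4); last by rewrite mulNr -natrM.
  by rewrite invfM mulrA mulfV ?oppr_eq0 // mul1r.
transitivity (\sum_(k < p) ('C(n, k) * franel k)%:R * x ^+ k).
  by apply: eq_bigr => k _; rewrite !natrM central_bin_Fp // -central_x exprMn; ring.
rewrite (@big_ord_widen_idx _ _ _ n.+1 p (fun k => ('C(n, k) * franel k)%:R * x ^+ k)) //;
  last first.
  by move=> k /andP[lt_nk _]; rewrite bin_small // mul0n mul0r.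
rewrite franel_binomial_sum.
transitivity (\sum_(j < n.+1) (-1) ^+ j * 'C(n, j)%:R ^+ 2 * bin_pair_sum (n - j) j x).
  apply: eq_bigr => j _; rewrite natrM central_bin_Fp ?(leq_trans (ltn_ord j)) //.
  by rewrite -x_sign exprMn; ring.
apply: (@sum_odd_antisym _ _
  (fun j => (-1) ^+ j * 'C(n, j)%:R ^+ 2 * bin_pair_sum (n - j) j x)) => // j le_jn.
rewrite subKn // bin_sub // bin_pair_sumC -signr_odd oddB // n_odd -[in RHS]signr_odd.
by case: (odd j); rewrite /= ?expr0 ?expr1; ring.
Qed.

End FranelModPrime.

Lemma rat_cong0_of_scaled (p : nat) (M N : int) (S : rat) :
  coprimez p M -> S * M%:~R = N%:~R -> (p %| N)%Z -> rat_cong p S 0.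
Proof.
move=> co_pM SM_N p_N; rewrite /rat_cong subr0.
have numM : numq S * M = N * denq S.
  by apply: (@intr_inj rat); rewrite !rmorphM /= numqE -SM_N mulrAC.
split.
  by rewrite -[p]absz_nat -dvdzE -(Gauss_dvdzl _ co_pM) numM dvdz_mulr.
have den_M : (denq S %| M)%Z.
  have co_den_num : coprimez (denq S) (numq S).
    by rewrite coprimezE coprime_sym coprime_num_den.
  by rewrite -(Gauss_dvdzr _ co_den_num) numM dvdz_mull.
exact: coprime_dvdr den_M co_pM.
Qed.

Lemma rat_cong0_sum_div_pow (p : nat) (d : int) (a : nat -> int) (m : nat) :
    prime p -> ~~ (p %| d)%Z ->
    \sum_(k < m) (a k)%:~R * (d%:~R : 'F_p)^-1 ^+ k = 0 ->
  rat_cong p (\sum_(k < m) (a k)%:~R / d%:~R ^+ k) 0.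
Proof.
move=> p_pr p_ndvd_d sum0.
have d_Fp : (d%:~R : 'F_p) != 0 by rewrite -(dvdz_pcharf (pchar_Fp p_pr)).
have d_Q : (d%:~R : rat) != 0.
  by rewrite intr_eq0; apply: contraNneq p_ndvd_d => ->; apply: dvdz0.
apply: (@rat_cong0_of_scaled p (d ^+ m) (\sum_(k < m) a k * d ^+ (m - k))).
- by apply: coprimezXr; rewrite coprimezE prime_coprime.
- rewrite big_distrl rmorph_sum; apply: eq_bigr => k _ /=.
  rewrite rmorphM !rmorphXn exprB ?unitfE // 1?ltnW //; field.
  by rewrite expf_neq0.
- rewrite (dvdz_pcharf (pchar_Fp p_pr)) rmorph_sum /=.
  apply/eqP.
  transitivity ((d%:~R : 'F_p) ^+ m * \sum_(k < m) (a k)%:~R * d%:~R^-1 ^+ k).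
    rewrite big_distrr; apply: eq_bigr => k _ /=.
    rewrite rmorphM rmorphXn exprB ?unitfE // 1?ltnW // exprVn; field.
    by rewrite expf_neq0.
  by rewrite sum0 mulr0.
Qed.

Theorem theorem1p3 (p : nat) (hp : prime p) (hp4 : (p %% 4 = 3)%N) :
  rat_cong p
    (\sum_(k < p) ('C(k.*2, k)%:R * (franel k)%:R / ((-16) ^+ k) : rat)) 0.
Proof.
set n := (p %/ 4).*2.+1.
have p_ndvd_def : p = n.*2.+1 by rewrite /n; lia.
have n_odd : odd n by rewrite /n /= odd_double.
have p_16 : ~~ (p %| - 16%:R)%Z.
  rewrite dvdzE abszN -prime_coprime // (_ : `|16%:R| = 2 ^ 4)%N //.
  by rewrite coprimeXr // coprimen2 p_ndvd_def /= odd_double.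
have := @rat_cong0_sum_div_pow p (- 16%:R) (fun k => ('C(k.*2, k) * franel k)%N) p
  hp p_16.
rewrite !rmorphN /= !rmorph_nat.
under eq_bigr do rewrite -natz rmorph_nat.
move/(_ (franel_central_sum_Fp hp p_ndvd_def n_odd)).
by under eq_bigr do rewrite -natz rmorph_nat natrM.
Qed.
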